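(* Let $\mathcal U=\{U_1|\dots|U_b\}$ be a partition of a $v$-set $\mathcal V$ into $b$ parts of size $a$, $v=ab$, $a>1$, $b\ge4$, let $k=ak_0$ with $1\le k_0\le b-1$, let $\Gamma_0\subseteq\binom{\mathcal U}{k_0}$, and let $\Gamma=\Gamma(a,\Gamma_0)$ be the set of all $k$-subsets of $\mathcal V$ of the form $\bigcup_{U\in\gamma_0}U$ with $\gamma_0\in\Gamma_0$. Let $A={\rm Aut}(\Gamma_0)\cap{\rm Sym}(\mathcal U)$. Then ${\rm Aut}(\Gamma)$ contains $S_a\wr A$, and $\delta(\Gamma)=a\,\delta(\Gamma_0)$. Moreover: (a) if $\Gamma_0$ is $A$-strongly incidence-transitive, then $\Gamma$ is $(S_a\wr A)$-strongly incidence-transitive, and either $\Gamma_0=\binom{\mathcal U}{k_0}$ or $\delta(\Gamma_0)\ge2$; (b) conversely, if $S_a\wr A$ is neighbour-transitive on $\Gamma$ (i.e. transitive on $\Gamma$ and on its neighbour set), then either $\Gamma_0$ is $A$-strongly incidence-transitive, or $a=2$ and $\delta(\Gamma_0)=1$.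
   Context: $\Gamma_0$ is regarded as a set of vertices of the Johnson graph $J(b,k_0)$ on the $b$-set $\mathcal U$, and $\Gamma$ as a set of vertices of $J(v,k)$ on $\mathcal V$; $J(n,j)$ has as vertices the $j$-subsets of an $n$-set, adjacent iff they meet in $j-1$ points. For such a set $\Delta$ of vertices: $\delta(\Delta)$ is the least graph distance between distinct elements; the neighbour set is the set of vertices not in $\Delta$ adjacent to some element of $\Delta$; ${\rm Aut}(\Delta)$ is the setwise stabiliser of $\Delta$ in the automorphism group of the Johnson graph. $S_a\wr A$ denotes the subgroup of ${\rm Sym}(\mathcal V)$ preserving $\mathcal U$, inducing a permutation in $A$ on the parts and arbitrary permutations within parts. $\Delta$ is $H$-strongly incidence-transitive (for $H$ a group of permutations of the underlying set leaving $\Delta$ invariant) if $H$ is transitive on $\Delta$ and, for $\delta\in\Delta$, $H_\delta$ is transitive on $\delta\times(\text{underlying set}\setminus\delta)$. *)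

From mathcomp Require Import all_boot all_order all_fingroup.
Set Implicit Arguments. Unset Strict Implicit. Unset Printing Implicit Defensive.

Section Johnson.
Variable T : finType.

Definition pact (h : {perm T}) (x : {set T}) : {set T} := [set h z | z in x].

Definition jadj (Om : {set T}) (j : nat) : rel {set T} :=
  fun x y => [&& x \subset Om, y \subset Om, #|x| == j, #|y| == j
              & #|x :&: y| == j.-1].

Definition jwalk (Om : {set T}) (j : nat) (x y : {set T}) (m : nat) : Prop :=
  exists s : seq {set T},
    [/\ size s = m, path (jadj Om j) x s & last x s = y].

Definition jdist (Om : {set T}) (j : nat) (x y : {set T}) (d : nat) : Prop :=
  jwalk Om j x y d /\ forall m, jwalk Om j x y m -> d <= m.

Definition min_dist (Om : {set T}) (j : nat) (Delta : {set {set T}}) (d : nat)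
  : Prop :=
  (exists x y, [/\ x \in Delta, y \in Delta, x != y & jdist Om j x y d]) /\
  (forall x y e, x \in Delta -> y \in Delta -> x != y -> jdist Om j x y e ->
     d <= e).

Definition nbr_set (Om : {set T}) (j : nat) (Delta : {set {set T}})
  : {set {set T}} :=
  [set y : {set T} | [&& y \subset Om, #|y| == j, y \notin Delta
                       & [exists x in Delta, jadj Om j x y]]].

Definition invariant_on (H : {set {perm T}}) (Delta : {set {set T}}) : Prop :=
  forall h x, h \in H -> x \in Delta -> pact h x \in Delta.

Definition transitive_on (H : {set {perm T}}) (Delta : {set {set T}}) : Prop :=
  forall x y, x \in Delta -> y \in Delta -> exists2 h, h \in H & pact h x = y.

Definition strongly_inc_trans (H : {set {perm T}}) (Om : {set T})
  (Delta : {set {set T}}) : Prop :=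
  [/\ invariant_on H Delta, transitive_on H Delta &
   forall x, x \in Delta ->
     forall p1 q1 p2 q2, p1 \in x -> q1 \in Om :\: x ->
       p2 \in x -> q2 \in Om :\: x ->
       exists2 h, h \in H & [/\ pact h x = x, h p1 = p2 & h q1 = q2]].

Definition neighbour_trans (H : {set {perm T}}) (Om : {set T}) (j : nat)
  (Delta : {set {set T}}) : Prop :=
  transitive_on H Delta /\ transitive_on H (nbr_set Om j Delta).

End Johnson.

Section Wreath.
Variable V : finType.

Definition GammaOf (Gamma0 : {set {set {set V}}}) : {set {set V}} :=
  [set \bigcup_(U in g0) U | g0 : {set {set V}} in Gamma0].

(* A = Aut(Gamma0) cap Sym(U): permutations of the set of parts P
   (permutations of {set V} supported on P) stabilising Gamma0. *)
Definition AutU (P : {set {set V}}) (Gamma0 : {set {set {set V}}})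
  : {set {perm {set V}}} :=
  [set s : {perm {set V}} | perm_on P s &&
     (pact s @: Gamma0 == Gamma0)].

(* S_a wr A : permutations of V preserving the partition P and inducing
   on the parts a permutation lying in A. *)
Definition wreath (P : {set {set V}}) (A : {set {perm {set V}}})
  : {set {perm V}} :=
  [set g : {perm V} | [exists s in A, [forall U in P, s U == pact g U]]].

End Wreath.

From mathcomp Require Import all_boot all_order all_fingroup.
From mathcomp Require Import zify.

Set Implicit Arguments. Unset Strict Implicit. Unset Printing Implicit Defensive.

(* The Johnson distance between j-subsets x, y is #|x :\: y|, realised by
   exchanging one point at a time. Elements of Gamma are unions of parts, so
   #|cover g0 :\: cover g1| = a * #|g0 :\: g1|, which scales delta by a.
   Since all parts have size a, every permutation of the parts lifts to the
   wreath product, even with two points in distinct parts sent to prescribed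
   points of their image parts; this transfers strong incidence-transitivity
   from Gamma0 to Gamma.  A strongly incidence-transitive set containing one
   adjacent pair is closed under all exchanges, hence complete.
   Conversely, exchanging u in cover g0 with w outside gives a neighbour of
   Gamma adjacent to no element of Gamma other than cover g0, unless a = 2
   and Gamma0 has an adjacent pair (a counting argument).  So an element of the wreath
   product moving one such neighbour to another fixes cover g0 and sends
   (u, w) to (u', w'); its induced permutation of parts is the element of A
   required by strong incidence-transitivity of Gamma0. *)

Section Johnson.
Variable T : finType.
Implicit Types (x y z : {set T}) (p q : T) (Om : {set T}) (D : {set {set T}}).

Definition exchange x p q := q |: (x :\ p).

Definition has_adjacent Om j D :=
  [exists x in D, exists y in D, (x != y) && jadj Om j x y].

Lemma pactM (g h : {perm T}) x : pact (g * h) x = pact h (pact g x).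
Proof. by rewrite /pact -imset_comp; apply: eq_imset => z; rewrite permM. Qed.

Lemma mem_pact (h : {perm T}) x p : (h p \in pact h x) = (p \in x).
Proof. exact/mem_imset/perm_inj. Qed.

Lemma card_pact (h : {perm T}) x : #|pact h x| = #|x|.
Proof. exact/card_imset/perm_inj. Qed.

Lemma pact_exchange (h : {perm T}) x p q :
  pact h (exchange x p q) = exchange (pact h x) (h p) (h q).
Proof.
apply/setP=> z; rewrite -[z](permKV h) mem_pact !inE mem_pact.
by rewrite !(inj_eq perm_inj).
Qed.

Lemma jadj_pact (h : {perm T}) j x y :
  jadj [set: T] j x y -> jadj [set: T] j (pact h x) (pact h y).
Proof.
case/and5P=> _ _ hx hy hxy; apply/and5P; split; rewrite ?subsetT ?card_pact //.
rewrite /pact -imsetI; last by move=> ? ? _ _; exact: perm_inj.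
by rewrite card_imset //; exact: perm_inj.
Qed.

Lemma card_setDC x y : #|x| = #|y| -> #|x :\: y| = #|y :\: x|.
Proof. by have := cardsID y x; have := cardsID x y; rewrite setIC; lia. Qed.

Lemma card_setD_gt0 x y : #|x| = #|y| -> x != y -> 0 < #|x :\: y|.
Proof.
move=> hxy; apply: contraNT; rewrite -leqNgt leqn0 cards_eq0 setD_eq0 => sxy.
by rewrite eqEcard sxy hxy leqnn.
Qed.

Lemma card_setD_triangle x y z : #|x :\: z| <= #|x :\: y| + #|y :\: z|.
Proof.
have sub : x :\: z \subset (x :\: y) :|: (y :\: z).
  by apply/subsetP=> v; rewrite !inE; case: (v \in x); case: (v \in y); case: (v \in z).
by apply: leq_trans (subset_leq_card sub) _; rewrite cardsU; lia.
Qed.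

Lemma card_exchange x p q : p \in x -> q \notin x -> #|exchange x p q| = #|x|.
Proof.
by move=> px qx; rewrite cardsU1 [in RHS](cardsD1 p x) px !inE (negbTE qx) andbF.
Qed.

Lemma setI_exchange x p q : p \in x -> q \notin x -> x :&: exchange x p q = x :\ p.
Proof.
move=> px qx; apply/setP=> v; rewrite !inE.
by case: eqP => [->|_]; rewrite ?(negbTE qx) ?andbF //= andbCA andbb.
Qed.

Lemma card_setD_exchange x y p q :
  p \in x :\: y -> q \in y -> #|exchange x p q :\: y| = #|x :\: y|.-1.
Proof.
move=> pxy qy; rewrite [in RHS](cardsD1 p) pxy.
suff -> : exchange x p q :\: y = (x :\: y) :\ p by [].
apply/setP=> v; rewrite !inE.
by case: eqP => [->|_]; rewrite ?qy ?andbF //= andbCA.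
Qed.

Lemma exchangeK x p q : p \in x -> q \notin x -> exchange (exchange x p q) q p = x.
Proof.
move=> px qx; apply/setP=> v; rewrite !inE.
case: (v =P p) => [->|_]; rewrite ?px //=.
by case: (v =P q) => [->|_]; rewrite ?(negbTE qx).
Qed.

Lemma exchange_inj x p q p' q' : p \in x -> q \notin x -> q' \notin x ->
  exchange x p q = exchange x p' q' -> p = p' /\ q = q'.
Proof.
move=> px qx q'x e; split.
  have : p \notin exchange x p q by rewrite !inE eqxx orbF; apply: contraNneq qx => <-.
  by rewrite e !inE px andbT negb_or negbK => /andP [_ /eqP].
have : q \in exchange x p' q' by rewrite -e setU11.
by rewrite !inE (negbTE qx) andbF orbF => /eqP.
Qed.

Lemma jadj_exchange Om j x p q : x \subset Om -> #|x| = j ->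
  p \in x -> q \in Om :\: x -> jadj Om j x (exchange x p q).
Proof.
move=> xOm hx px /setDP [qOm qx]; apply/and5P; split=> //.
- by rewrite subUset sub1set qOm (subset_trans (subD1set _ _) xOm).
- by rewrite hx.
- by rewrite card_exchange // hx.
by rewrite setI_exchange // -hx (cardsD1 p x) px.
Qed.

Lemma jadj_card_setD Om j x y : jadj Om j x y -> #|x :\: y| <= 1.
Proof. by case/and5P=> _ _ /eqP hx _ /eqP hxy; have := cardsID y x; lia. Qed.

Lemma jadjE Om j x y : x \subset Om -> y \subset Om -> #|x| = j -> #|y| = j ->
  x != y -> jadj Om j x y = (#|x :\: y| == 1).
Proof.
move=> xOm yOm hx hy nxy; rewrite /jadj xOm yOm hx hy !eqxx /=.
have := card_setD_gt0 (etrans hx (esym hy)) nxy; have := cardsID y x; rewrite hx.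
by move: #|x :&: y| #|x :\: y| => i d; case: eqP; case: eqP; lia.
Qed.

Lemma jadj_exchangeP Om j x y : jadj Om j x y -> x != y ->
  exists p q, [/\ p \in x, q \in Om :\: x & y = exchange x p q].
Proof.
move=> xy nxy; have := xy; case/and5P=> xOm yOm /eqP hx /eqP hy _.
have hxy1 : #|x :\: y| = 1 by apply/eqP; rewrite -(jadjE xOm yOm hx hy nxy).
have [p [px py]] : exists p, p \in x /\ p \notin y.
  have /card_gt0P [p] : 0 < #|x :\: y| by rewrite hxy1.
  by rewrite inE => /andP []; exists p.
have [q [qy qx]] : exists q, q \in y /\ q \notin x.
  have /card_gt0P [q] : 0 < #|y :\: x| by rewrite -card_setDC ?hx ?hy ?hxy1.
  by rewrite inE => /andP []; exists q.
have xy_p : x :\: y = [set p].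
  by apply/eqP; rewrite eq_sym eqEcard sub1set inE py px cards1 hxy1.
exists p, q; split; rewrite ?inE ?qx ?(subsetP yOm) //.
apply/eqP; rewrite eq_sym eqEcard card_exchange // hx hy leqnn andbT.
rewrite subUset sub1set qy /=; apply/subsetP=> v /setD1P [vp vx].
apply: contraT => vy; have : v \in x :\: y by rewrite inE vy.
by rewrite xy_p inE (negbTE vp).
Qed.

Lemma exchange_ind (Q : {set T} -> Prop) y : Q y ->
  (forall z p q, #|z| = #|y| -> p \in z :\: y -> q \in y :\: z ->
     Q (exchange z p q) -> Q z) ->
  forall z, #|z| = #|y| -> Q z.
Proof.
move=> Qy Qstep z; move: {2}#|z :\: y| (erefl #|z :\: y|) => n.
elim: n z => [|n IH] z hn hz.
  suff -> : z = y by [].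
  by apply/eqP; rewrite eqEcard hz leqnn andbT -setD_eq0 -cards_eq0 hn.
have /card_gt0P [p pzy] : 0 < #|z :\: y| by rewrite hn.
have /card_gt0P [q qyz] : 0 < #|y :\: z| by rewrite -card_setDC ?hn.
have [pz _] := setDP pzy; have [qy qz] := setDP qyz.
apply: (Qstep z p q hz pzy qyz); apply: IH.
  by rewrite card_setD_exchange // hn.
by rewrite card_exchange.
Qed.

Lemma jwalk_cons Om j x y z m :
  jadj Om j x y -> jwalk Om j y z m -> jwalk Om j x z m.+1.
Proof. by move=> xy [s [<- ys <-]]; exists (y :: s); rewrite /= xy ys. Qed.

Lemma jwalk_card_setD Om j x y m : jwalk Om j x y m -> #|x :\: y| <= m.
Proof.
case=> s [<- xs <-]; elim: s x xs => [|z s IH] x /=; first by rewrite setDv cards0.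
case/andP=> xz zs; apply: leq_trans (card_setD_triangle x z _) _.
by have := jadj_card_setD xz; have := IH z zs; lia.
Qed.

Lemma jwalk_setD Om x y : x \subset Om -> y \subset Om -> #|x| = #|y| ->
  jwalk Om #|y| x y #|x :\: y|.
Proof.
move=> xOm yOm hxy; move: x hxy xOm.
apply: (exchange_ind (Q := fun x => x \subset Om -> jwalk Om #|y| x y #|x :\: y|)).
  by rewrite setDv cards0; exists [::].
move=> z p q hz pzy /setDP [qy qz] IH zOm; have [pz _] := setDP pzy.
have zOm' : exchange z p q \subset Om.
  by rewrite subUset sub1set (subsetP yOm) // (subset_trans (subD1set _ _) zOm).
have -> : #|z :\: y| = #|exchange z p q :\: y|.+1.
  by rewrite card_setD_exchange // prednK // card_gt0; apply/set0Pn; exists p.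
apply: jwalk_cons (IH zOm'); apply: jadj_exchange => //.
by rewrite inE qz (subsetP yOm).
Qed.

Lemma jdistE Om j x y d : x \subset Om -> y \subset Om -> #|x| = j -> #|y| = j ->
  jdist Om j x y d <-> d = #|x :\: y|.
Proof.
move=> xOm yOm hx hy; have wxy := jwalk_setD xOm yOm (etrans hx (esym hy)).
rewrite hy in wxy; split => [[w dmin] | ->].
  by apply/eqP; rewrite eqn_leq (jwalk_card_setD w) dmin.
by split=> // m; apply: jwalk_card_setD.
Qed.

Section Distances.
Variables (Om : {set T}) (j : nat) (D : {set {set T}}).
Hypothesis D_sub : forall x, x \in D -> x \subset Om /\ #|x| = j.

Lemma jdistE_in x y d : x \in D -> y \in D -> jdist Om j x y d <-> d = #|x :\: y|.
Proof.
by move=> /D_sub [xOm hx] /D_sub [yOm hy]; apply: jdistE.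
Qed.

Lemma min_distE d : min_dist Om j D d <->
  (exists x y, [/\ x \in D, y \in D, x != y & d = #|x :\: y|]) /\
  (forall x y, x \in D -> y \in D -> x != y -> d <= #|x :\: y|).
Proof.
split=> -[[x [y [xD yD nxy dxy]]] dmin]; split.
- by exists x, y; split=> //; apply/(jdistE_in _ xD yD).
- by move=> x' y' x'D y'D nxy'; apply: (dmin x' y') => //; apply/(jdistE_in _ x'D y'D).
- by exists x, y; split=> //; apply/(jdistE_in _ xD yD).
- by move=> x' y' e x'D y'D nxy' /(jdistE_in _ x'D y'D) ->; apply: dmin.
Qed.

Lemma jadjE_in x y : x \in D -> y \in D -> x != y -> jadj Om j x y = (#|x :\: y| == 1).
Proof. by move=> /D_sub [xOm hx] /D_sub [yOm hy]; apply: jadjE. Qed.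

Lemma min_dist1 : has_adjacent Om j D -> min_dist Om j D 1.
Proof.
case/exists_inP=> x xD /exists_inP [y yD /andP [nxy xy]].
apply/min_distE; split.
  by exists x, y; split=> //; apply/esym/eqP; rewrite -jadjE_in.
move=> x' y' x'D y'D; apply: card_setD_gt0.
by have [_ ->] := D_sub x'D; have [_ ->] := D_sub y'D.
Qed.

Lemma min_dist_ge2 d : ~~ has_adjacent Om j D -> min_dist Om j D d -> 1 < d.
Proof.
move=> nadj /min_distE [[x [y [xD yD nxy ->]]] _].
have := card_setD_gt0 (etrans (D_sub xD).2 (esym (D_sub yD).2)) nxy.
have : #|x :\: y| != 1.
  apply: contra nadj; rewrite -jadjE_in // => xy.
  by apply/exists_inP; exists x => //; apply/exists_inP; exists y; rewrite ?nxy.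
by case: #|_| => [|[]].
Qed.

Lemma strongly_inc_trans_complete (H : {set {perm T}}) :
  strongly_inc_trans H Om D -> (forall h, h \in H -> perm_on Om h) ->
  has_adjacent Om j D -> D = [set x : {set T} | (x \subset Om) && (#|x| == j)].
Proof.
case=> Hinv Htr Hloc Hperm /exists_inP [x xD /exists_inP [y yD /andP [nxy xy]]].
have [p0 [q0 [p0x q0x ey]]] := jadj_exchangeP xy nxy.
(* D is closed under exchanges: transport the exchange [x -> y] onto [z]. *)
have D_exchange z p q : z \in D -> p \in z -> q \in Om :\: z -> exchange z p q \in D.
  move=> zD pz qz; have [h hH hxz] := Htr x z xD zD.
  have hp0 : h p0 \in z by rewrite -hxz mem_pact.
  have hq0 : h q0 \in Om :\: z.
    have [q0Om q0x'] := setDP q0x.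
    by rewrite inE -hxz mem_pact q0x' (perm_closed _ (Hperm h hH)).
  have [h' h'H [h'z <- <-]] := Hloc z zD _ _ _ _ hp0 hq0 pz qz.
  by rewrite -h'z -pact_exchange -hxz -pact_exchange -ey !Hinv.
have [xOm hx] := D_sub xD.
apply/setP=> z; rewrite inE; apply/idP/andP => [/D_sub [-> ->] // | [zOm /eqP hz]].
move: z {hz}(etrans hz (esym hx)) zOm; apply: exchange_ind => [//|z p q _ pzx qxz IH zOm].
have [pz px] := setDP pzx; have [qx qz] := setDP qxz.
rewrite -(exchangeK pz qz); apply: D_exchange; first apply: IH.
- by rewrite subUset sub1set (subsetP xOm) // (subset_trans (subD1set _ _) zOm).
- exact: setU11.
rewrite !inE (subsetP zOm) // eqxx /= orbF andbT.
by apply: contraNneq px => ->.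
Qed.

End Distances.
End Johnson.

Section UniformPartition.
Variables (V : finType) (P : {set {set V}}) (a : nat).
Hypothesis partP : partition P [set: V].
Hypothesis card_part : forall U, U \in P -> #|U| = a.

Local Notation pb := (pblock P).
Implicit Types (g h : {set {set V}}) (s : {perm {set V}}) (f : {perm V}).

Lemma pblock_part v : pb v \in P.
Proof. by apply: pblock_mem; rewrite (cover_partition partP) inE. Qed.

Lemma mem_pblock_self v : v \in pb v.
Proof. by rewrite mem_pblock (cover_partition partP) inE. Qed.

Lemma pblock_eq U v : U \in P -> v \in U -> pb v = U.
Proof. by case/and3P: partP => _ tP _; apply: def_pblock. Qed.

Lemma mem_part U v : U \in P -> (v \in U) = (pb v == U).
Proof.
move=> UP; apply/idP/eqP => [|<-]; [exact: pblock_eq | exact: mem_pblock_self].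
Qed.

Lemma pblock_surj U : U \in P -> exists v, pb v = U.
Proof.
case/and3P: partP => _ _ P0 UP; have /set0Pn [v vU] : U != set0.
  by apply: contraNneq P0 => <-.
by exists v; apply: pblock_eq.
Qed.

Lemma mem_cover g v : g \subset P -> (v \in cover g) = (pb v \in g).
Proof.
move=> gP; apply/bigcupP/idP => [[U Ug vU] | ?].
  by rewrite (pblock_eq (subsetP gP U Ug) vU).
by exists (pb v) => //; apply: mem_pblock_self.
Qed.

Lemma cover_inj g h : g \subset P -> h \subset P -> cover g = cover h -> g = h.
Proof.
move=> gP hP e; apply/setP=> U; case: (boolP (U \in P)) => UP.
  by have [v <-] := pblock_surj UP; rewrite -!mem_cover ?e.
by rewrite (contraNF (subsetP gP U)) ?(contraNF (subsetP hP U)).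
Qed.

Lemma card_cover g : g \subset P -> #|cover g| = a * #|g|.
Proof.
move=> gP; rewrite mulnC; apply: card_uniform_partition => [U Ug|].
  exact/card_part/(subsetP gP).
case/and3P: partP => _ tP P0; apply/and3P; split=> //; first exact: trivIsetS tP.
exact: contra (subsetP gP _) P0.
Qed.

Lemma coverD g h : g \subset P -> h \subset P -> cover g :\: cover h = cover (g :\: h).
Proof.
move=> gP hP; have gDP : g :\: h \subset P by apply: subset_trans gP; apply: subsetDl.
by apply/setP=> v; rewrite inE !mem_cover // inE andbC.
Qed.

Lemma card_coverD g h : g \subset P -> h \subset P ->
  #|cover g :\: cover h| = a * #|g :\: h|.
Proof.
by move=> gP hP; rewrite coverD // card_cover //; apply: subset_trans gP; apply: subsetDl.
Qed.

Lemma coverI g h : g \subset P -> h \subset P -> cover g :&: cover h = cover (g :&: h).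
Proof.
move=> gP hP; have gIP : g :&: h \subset P by apply: subset_trans gP; apply: subsetIl.
by apply/setP=> v; rewrite inE !mem_cover // inE.
Qed.

Lemma pact_cover f s g : {in P, pact f =1 s} -> g \subset P ->
  pact f (cover g) = cover (pact s g).
Proof.
move=> fs gP; rewrite /pact imset_cover cover_imset; apply: eq_bigr => U Ug.
exact: fs (subsetP gP U Ug).
Qed.

Lemma pblock_perm f s v : perm_on P s -> {in P, pact f =1 s} -> pb (f v) = s (pb v).
Proof.
move=> sP fs; apply: pblock_eq; first by rewrite perm_closed ?pblock_part.
by rewrite -fs ?pblock_part // mem_pact mem_pblock_self.
Qed.

Lemma pact_tperm_part v w U : pb v = pb w -> U \in P -> pact (tperm v w) U = U.
Proof.
move=> vw UP; apply/setP=> z; rewrite -[z in LHS](tpermK v w) mem_pact.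
by case: tpermP => [-> | -> |] //; rewrite !mem_part // vw.
Qed.

Definition part_index v := index v (enum (pb v)).

Definition lift_parts s v := nth v (enum (s (pb v))) (part_index v).

Lemma lift_parts_mem s v : perm_on P s -> lift_parts s v \in s (pb v).
Proof.
move=> sP; rewrite /lift_parts -mem_enum; apply: mem_nth.
rewrite -cardE card_part ?perm_closed ?pblock_part // -(card_part (pblock_part v)).
by rewrite cardE index_mem mem_enum mem_pblock_self.
Qed.

Lemma lift_parts_inj s : perm_on P s -> injective (lift_parts s).
Proof.
move=> sP v w e.
have sbP u : s (pb u) \in P by rewrite perm_closed ?pblock_part.
have vw : pb v = pb w.
  apply: (@perm_inj _ s); rewrite -(pblock_eq (sbP v) (lift_parts_mem v sP)) e.
  exact: pblock_eq (sbP w) (lift_parts_mem w sP).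
have size_e u : size (enum (s (pb w))) = size (enum (pb u)).
  by rewrite -!cardE card_part ?sbP // card_part ?pblock_part.
have iv : part_index v < size (enum (s (pb w))).
  by rewrite (size_e v) index_mem mem_enum mem_pblock_self.
have iw : part_index w < size (enum (s (pb w))).
  by rewrite (size_e w) index_mem mem_enum mem_pblock_self.
move: e; rewrite /lift_parts vw (set_nth_default w v iv) => /eqP.
rewrite nth_uniq ?enum_uniq // /part_index vw => /eqP e.
have vE : v \in enum (pb w) by rewrite mem_enum -vw mem_pblock_self.
have wE : w \in enum (pb w) by rewrite mem_enum mem_pblock_self.
by rewrite -(nth_index v vE) e (nth_index v wE).
Qed.

Lemma lift_perm_parts s : perm_on P s -> exists f : {perm V}, {in P, pact f =1 s}.
Proof.
move=> sP; exists (perm (lift_parts_inj sP)) => U UP.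
apply/eqP; rewrite eqEcard card_pact card_part ?perm_closed // card_part // leqnn andbT.
apply/subsetP=> _ /imsetP [v vU ->]; rewrite permE -(pblock_eq UP vU).
exact: lift_parts_mem.
Qed.

Lemma pact_tperm_compat f s v w : perm_on P s -> {in P, pact f =1 s} ->
  pb v = pb w -> {in P, pact (f * tperm v w) =1 s}.
Proof.
move=> sP fs vw U UP; rewrite pactM fs // pact_tperm_part // perm_closed //.
Qed.

Lemma lift_perm_parts2 s v1 w1 v2 w2 : perm_on P s ->
  s (pb v1) = pb v2 -> s (pb w1) = pb w2 -> pb v2 != pb w2 ->
  exists f : {perm V}, [/\ {in P, pact f =1 s}, f v1 = v2 & f w1 = w2].
Proof.
move=> sP sv sw vw2; have [f fs] := lift_perm_parts sP.
pose f1 := (f * tperm v2 (f v1))%g.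
have f1s : {in P, pact f1 =1 s}.
  by apply: pact_tperm_compat; rewrite // (pblock_perm _ sP fs).
have f1v : f1 v1 = v2 by rewrite permM tpermR.
exists (f1 * tperm w2 (f1 w1))%g; split.
- by apply: pact_tperm_compat; rewrite // (pblock_perm _ sP f1s).
- rewrite permM f1v tpermD //; first by apply: contraNneq vw2 => ->.
  by apply: contraNneq vw2 => <-; rewrite (pblock_perm _ sP f1s) sw.
- by rewrite permM tpermR.
Qed.

End UniformPartition.

Lemma wreathP (V : finType) (P : {set {set V}}) (A : {set {perm {set V}}}) (f : {perm V}) :
  reflect (exists2 s, s \in A & {in P, pact f =1 s}) (f \in wreath P A).
Proof.
rewrite inE; apply: (iffP exists_inP) => -[s sA fs]; exists s => //.
  by move=> U UP; apply/esym/eqP; apply: (forall_inP fs).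
by apply/forall_inP => U UP; rewrite fs.
Qed.

Section Blowup.
Variables (V : finType) (P : {set {set V}}) (a k0 : nat) (Gamma0 : {set {set {set V}}}).
Hypothesis partP : partition P [set: V].
Hypothesis card_part : forall U, U \in P -> #|U| = a.
Hypothesis Gamma0_sub : forall g0, g0 \in Gamma0 -> g0 \subset P /\ #|g0| = k0.

Local Notation A := (AutU P Gamma0).
Local Notation W := (wreath P A).
Local Notation Gamma := (GammaOf Gamma0).

Lemma AutU_perm_on s : s \in A -> perm_on P s.
Proof. by rewrite inE => /andP []. Qed.

Lemma AutU_invariant : invariant_on A Gamma0.
Proof.
move=> s g0 + g0G; rewrite inE => /andP [_ /eqP sG].
by rewrite -sG; apply: imset_f.
Qed.

Lemma mem_GammaOf g0 : g0 \in Gamma0 -> cover g0 \in Gamma.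
Proof. exact: imset_f. Qed.

Lemma card_cover_Gamma0 g0 : g0 \in Gamma0 -> #|cover g0| = a * k0.
Proof. by case/Gamma0_sub => g0P <-; apply: (card_cover partP card_part). Qed.

Lemma GammaOf_sub X : X \in Gamma -> X \subset [set: V] /\ #|X| = a * k0.
Proof. by case/imsetP=> g0 g0G ->; rewrite subsetT card_cover_Gamma0. Qed.

Lemma wreath_invariant : invariant_on W Gamma.
Proof.
move=> f _ /wreathP [s sA fs] /imsetP [g0 g0G ->].
rewrite (pact_cover fs (Gamma0_sub g0G).1); exact/mem_GammaOf/(AutU_invariant sA).
Qed.

Lemma pact_Gamma0_sub s g0 : s \in A -> g0 \in Gamma0 -> pact s g0 \subset P.
Proof. by move=> sA g0G; case: (Gamma0_sub (AutU_invariant sA g0G)). Qed.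

Lemma min_dist_GammaOf d0 :
  min_dist P k0 Gamma0 d0 -> min_dist [set: V] (a * k0) Gamma (a * d0).
Proof.
case/(min_distE Gamma0_sub) => -[x [y [xG yG nxy ->]]] dmin.
have [xP _] := Gamma0_sub xG; have [yP _] := Gamma0_sub yG.
apply/(min_distE GammaOf_sub); split.
  exists (cover x), (cover y); split; rewrite ?mem_GammaOf //.
    by apply: contra nxy => /eqP /(cover_inj partP xP yP) ->.
  by rewrite (card_coverD partP card_part xP yP).
move=> _ _ /imsetP [x' x'G ->] /imsetP [y' y'G ->] nxy'.
have [x'P _] := Gamma0_sub x'G; have [y'P _] := Gamma0_sub y'G.
rewrite (card_coverD partP card_part x'P y'P) leq_mul2l dmin ?orbT //.
by apply: contraNneq nxy' => ->.
Qed.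

Lemma wreath_strongly_inc_trans :
  strongly_inc_trans A P Gamma0 -> strongly_inc_trans W [set: V] Gamma.
Proof.
case=> _ Atr Aloc; split; first exact: wreath_invariant.
  move=> _ _ /imsetP [g0 g0G ->] /imsetP [g1 g1G ->].
  have [s sA <-] := Atr g0 g1 g0G g1G.
  have [f fs] := lift_perm_parts partP card_part (AutU_perm_on sA).
  exists f; first by apply/wreathP; exists s.
  exact: pact_cover fs (Gamma0_sub g0G).1.
move=> _ /imsetP [g0 g0G ->] v1 w1 v2 w2; have [g0P _] := Gamma0_sub g0G.
rewrite !inE !(mem_cover partP _ g0P) !andbT => v1g w1g v2g w2g.
have w_out w : pblock P w \notin g0 -> pblock P w \in P :\: g0.
  by move=> wg; rewrite inE wg pblock_part.
have [s sA [sg0 sv sw]] := Aloc g0 g0G _ _ _ _ v1g (w_out _ w1g) v2g (w_out _ w2g).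
have vw2 : pblock P v2 != pblock P w2 by apply: contraNneq w2g => <-.
have [f [fs fv fw]] := lift_perm_parts2 partP card_part (AutU_perm_on sA) sv sw vw2.
exists f; first by apply/wreathP; exists s.
by split=> //; rewrite (pact_cover fs g0P) sg0.
Qed.

Lemma AutU_transitive : transitive_on W Gamma -> transitive_on A Gamma0.
Proof.
move=> Wtr g0 g1 g0G g1G.
have [f /wreathP [s sA fs] e] := Wtr _ _ (mem_GammaOf g0G) (mem_GammaOf g1G).
exists s => //; apply: (cover_inj partP (pact_Gamma0_sub sA g0G) (Gamma0_sub g1G).1).
by rewrite -(pact_cover fs (Gamma0_sub g0G).1).
Qed.

Section NeighbourTransitive.
Hypothesis a_gt1 : 1 < a.

Lemma exchange_cover_nbr g0 u w : g0 \in Gamma0 -> u \in cover g0 -> w \notin cover g0 ->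
  exchange (cover g0) u w \in nbr_set [set: V] (a * k0) Gamma.
Proof.
move=> g0G uX wX; have [g0P _] := Gamma0_sub g0G.
have cX := card_cover_Gamma0 g0G.
rewrite inE subsetT card_exchange // cX eqxx /=; apply/andP; split; last first.
  apply/exists_inP; exists (cover g0); first exact: mem_GammaOf.
  by apply: jadj_exchange; rewrite ?subsetT ?inE ?wX.
apply/negP => /imsetP [g1 g1G]; rewrite -/(cover g1) => e.
have [g1P _] := Gamma0_sub g1G.
have [w' w'w w'nw] : exists2 w', w' \in pblock P w & w' != w.
  have : 0 < #|pblock P w :\ w|.
    have := cardsD1 w (pblock P w); rewrite (mem_pblock_self partP).
    by rewrite (card_part (pblock_part partP w)); lia.
  by case/card_gt0P=> w'; rewrite !inE => /andP []; exists w'.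
have w'w_pb : pblock P w' = pblock P w := pblock_eq partP (pblock_part partP w) w'w.
have : w' \in exchange (cover g0) u w.
  by rewrite e (mem_cover partP _ g1P) w'w_pb -(mem_cover partP _ g1P) -e setU11.
rewrite !inE (negbTE w'nw) /= => /andP [_].
by rewrite (mem_cover partP _ g0P) w'w_pb -(mem_cover partP _ g0P) (negbTE wX).
Qed.

Lemma cover_jadj_exchange g0 g1 u w : g0 \in Gamma0 -> g1 \in Gamma0 ->
  w \notin cover g0 -> g1 != g0 ->
  jadj [set: V] (a * k0) (cover g1) (exchange (cover g0) u w) ->
  a = 2 /\ jadj P k0 g0 g1.
Proof.
move=> g0G g1G wX n10 /and5P [_ _ _ _ /eqP hI].
have [g0P c0] := Gamma0_sub g0G; have [g1P c1] := Gamma0_sub g1G.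
have g10P : g1 :&: g0 \subset P by apply: subset_trans g1P; apply: subsetIl.
have sub : cover g1 :&: exchange (cover g0) u w \subset w |: cover (g1 :&: g0).
  rewrite -(coverI partP g1P g0P); apply/subsetP=> v; rewrite !inE.
  by case/andP=> -> /orP [-> | /andP [_ ->]]; rewrite ?orbT.
have := subset_leq_card sub; rewrite cardsU1 hI (card_cover partP card_part g10P).
have := card_setD_gt0 (etrans c1 (esym c0)) n10; have := cardsID g0 g1; rewrite c1.
rewrite /jadj g0P g1P c0 c1 eqxx setIC /=.
move: #|g1 :&: g0| #|g1 :\: g0| (w \notin _) => c d [] /=; nia.
Qed.

Lemma wreath_fix_cover f g0 u1 w1 u2 w2 :
  ~~ ((a == 2) && has_adjacent P k0 Gamma0) -> f \in W -> g0 \in Gamma0 ->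
  u1 \in cover g0 -> w1 \notin cover g0 -> w2 \notin cover g0 ->
  pact f (exchange (cover g0) u1 w1) = exchange (cover g0) u2 w2 ->
  pact f (cover g0) = cover g0.
Proof.
move=> nadj fW g0G u1X w1X w2X fN.
have [g1 g1G fX] := imsetP (wreath_invariant fW (mem_GammaOf g0G)).
rewrite -/(cover g1) in fX; rewrite fX; suff -> : g1 = g0 by [].
apply: contraNeq nadj => n10.
have adj1 : jadj [set: V] (a * k0) (cover g1) (exchange (cover g0) u2 w2).
  rewrite -fX -fN; apply: jadj_pact.
  by apply: jadj_exchange; rewrite ?subsetT ?inE ?andbT ?card_cover_Gamma0.
have [-> adj] := cover_jadj_exchange g0G g1G w2X n10 adj1.
apply/andP; split=> //; apply/exists_inP; exists g0 => //; apply/exists_inP.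
by exists g1; rewrite // eq_sym n10.
Qed.

Lemma AutU_local_transitive :
  ~~ ((a == 2) && has_adjacent P k0 Gamma0) ->
  transitive_on W (nbr_set [set: V] (a * k0) Gamma) ->
  forall g0, g0 \in Gamma0 -> forall U1 W1 U2 W2, U1 \in g0 -> W1 \in P :\: g0 ->
    U2 \in g0 -> W2 \in P :\: g0 ->
    exists2 s, s \in A & [/\ pact s g0 = g0, s U1 = U2 & s W1 = W2].
Proof.
move=> nadj Ntr g0 g0G U1 W1 U2 W2 U1g /setDP [W1P W1g] U2g /setDP [W2P W2g].
have [g0P _] := Gamma0_sub g0G.
have [u1 u1U] := pblock_surj partP (subsetP g0P _ U1g).
have [u2 u2U] := pblock_surj partP (subsetP g0P _ U2g).
have [w1 w1W] := pblock_surj partP W1P; have [w2 w2W] := pblock_surj partP W2P.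
have u1X : u1 \in cover g0 by rewrite (mem_cover partP _ g0P) u1U.
have u2X : u2 \in cover g0 by rewrite (mem_cover partP _ g0P) u2U.
have w1X : w1 \notin cover g0 by rewrite (mem_cover partP _ g0P) w1W.
have w2X : w2 \notin cover g0 by rewrite (mem_cover partP _ g0P) w2W.
have [f fW fN] := Ntr _ _ (exchange_cover_nbr g0G u1X w1X) (exchange_cover_nbr g0G u2X w2X).
have [s sA fs] := wreathP _ _ _ fW; have sP := AutU_perm_on sA.
have fX := wreath_fix_cover nadj fW g0G u1X w1X w2X fN.
have mem_fX v : (f v \in cover g0) = (v \in cover g0) by rewrite -{1}fX mem_pact.
have [fu fw] : f u1 = u2 /\ f w1 = w2.
  apply: (exchange_inj (x := cover g0)); rewrite ?mem_fX //.
  by rewrite -{1}fX -pact_exchange fN.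
exists s => //; split.
- apply: (cover_inj partP (pact_Gamma0_sub sA g0G) g0P).
  by rewrite -(pact_cover fs g0P).
- by rewrite -u1U -(pblock_perm partP _ sP fs) fu.
- by rewrite -w1W -(pblock_perm partP _ sP fs) fw.
Qed.

Lemma neighbour_trans_GammaOf :
  neighbour_trans W [set: V] (a * k0) Gamma ->
  strongly_inc_trans A P Gamma0 \/ (a = 2 /\ min_dist P k0 Gamma0 1).
Proof.
case=> Wtr Ntr; case: (boolP ((a == 2) && has_adjacent P k0 Gamma0)).
  by case/andP=> /eqP a2 adj; right; split; last exact: min_dist1.
move=> nadj; left; split; first exact: AutU_invariant.
  exact: AutU_transitive.
exact: AutU_local_transitive.
Qed.

End NeighbourTransitive.

End Blowup.

Theorem lemma4p6 (V : finType) (P : {set {set V}}) (a b k0 : nat)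
  (Gamma0 : {set {set {set V}}}) :
  partition P [set: V] ->
  #|P| = b ->
  (forall U, U \in P -> #|U| = a) ->
  1 < a -> 4 <= b ->
  1 <= k0 <= b - 1 ->
  (forall g0, g0 \in Gamma0 -> g0 \subset P /\ #|g0| = k0) ->
  [/\ (* Aut(Gamma) contains S_a wr A *)
      (forall g x, g \in wreath P (AutU P Gamma0) -> x \in GammaOf Gamma0 ->
         pact g x \in GammaOf Gamma0),
      (* delta(Gamma) = a * delta(Gamma0) *)
      (forall d0, min_dist P k0 Gamma0 d0 ->
         min_dist [set: V] (a * k0) (GammaOf Gamma0) (a * d0)),
      (* (a) *)
      (strongly_inc_trans (AutU P Gamma0) P Gamma0 ->
         strongly_inc_trans (wreath P (AutU P Gamma0)) [set: V] (GammaOf Gamma0)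
         /\ (Gamma0 = [set g0 : {set {set V}} | (g0 \subset P) && (#|g0| == k0)]
             \/ forall d, min_dist P k0 Gamma0 d -> 2 <= d)) &
      (* (b) *)
      (neighbour_trans (wreath P (AutU P Gamma0)) [set: V] (a * k0)
         (GammaOf Gamma0) ->
         strongly_inc_trans (AutU P Gamma0) P Gamma0 \/
         (a = 2 /\ min_dist P k0 Gamma0 1))].
Proof.
move=> partP _ card_part a_gt1 _ _ Gamma0_sub; split.
- exact: wreath_invariant Gamma0_sub.
- exact: min_dist_GammaOf partP card_part Gamma0_sub.
- move=> Asit; split; first exact: wreath_strongly_inc_trans partP card_part Gamma0_sub Asit.
  have [adj | nadj] := boolP (has_adjacent P k0 Gamma0).
    by left; apply: (strongly_inc_trans_complete Gamma0_sub Asit) => // s /AutU_perm_on.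
  by right=> d; apply: min_dist_ge2 Gamma0_sub d nadj.
- exact: neighbour_trans_GammaOf partP card_part Gamma0_sub a_gt1.
Qed.
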